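(* Let $m\ge2$ and let $X_{2m}\subset\mathbb{R}^2$ be a regular polygon with $2m$ vertices centered at the origin, with circumradius $a_{2m}$ (half the length of its longest diagonal) satisfying $\sin\!\left(\frac{\pi-\frac{2\pi}{2m}}{2}\right)=\frac{1}{a_{2m}^2}$, i.e. $a_{2m}^2\cos(\pi/(2m))=1$. Then the dual Wulff shape $\mathcal{D}X_{2m}$ is not equal to $X_{2m}$, but $\mathcal{D}X_{2m}$ is congruent to $X_{2m}$. (For $m=2$: a square centered at the origin with $a_4^2=\sqrt2$, edge length $2/a_4$, has dual Wulff shape a different square centered at the origin with the same edge length.)
   Context: Every convex body $W\subset\mathbb{R}^{2}$ with the origin in its interior is a Wulff shape $\mathcal{W}_\gamma=\bigcap_{\theta\in S^1}\{x: x\cdot\theta\le\gamma(\theta)\}$ for some continuous $\gamma:S^1\to\mathbb{R}_+$. With $w(\theta)\theta$ the unique point of $\partial W$ on the ray $\{r\theta:r>0\}$, the dual Wulff shape is $\mathcal{D}W=\mathcal{W}_{\overline\gamma}$ with $\overline\gamma(\theta)=1/w(-\theta)$. *)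

From Stdlib Require Import Reals.
Open Scope R_scope.

Definition pt : Type := (R * R)%type.

Definition dot (x y : pt) : R := fst x * fst y + snd x * snd y.
Definition scale (r : R) (x : pt) : pt := (r * fst x, r * snd x).
Definition opp (x : pt) : pt := (- fst x, - snd x).
Definition dist (x y : pt) : R :=
  sqrt ((fst x - fst y) ^ 2 + (snd x - snd y) ^ 2).

Definition unit_vec (u : pt) : Prop := fst u ^ 2 + snd u ^ 2 = 1.

Definition vertex (m : nat) (a th0 : R) (k : nat) : pt :=
  (a * cos (th0 + INR k * (2 * PI / INR (2 * m))),
   a * sin (th0 + INR k * (2 * PI / INR (2 * m)))).

Definition regular_polygon (m : nat) (a th0 : R) (x : pt) : Prop :=
  exists lam : nat -> R,
    (forall k, (k < 2 * m)%nat -> 0 <= lam k) /\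
    sum_f_R0 lam (2 * m - 1) = 1 /\
    x = (sum_f_R0 (fun k => lam k * fst (vertex m a th0 k)) (2 * m - 1),
         sum_f_R0 (fun k => lam k * snd (vertex m a th0 k)) (2 * m - 1)).

Definition boundary (W : pt -> Prop) (x : pt) : Prop :=
  forall eps, 0 < eps ->
    (exists y, W y /\ dist x y < eps) /\ (exists z, ~ W z /\ dist x z < eps).

(* radial W u r  <->  r = w(u) : r > 0 and r u is a (the) boundary point of W
   on the ray through u. *)
Definition radial (W : pt -> Prop) (u : pt) (r : R) : Prop :=
  0 < r /\ boundary W (scale r u).

Definition wulff (gamma : pt -> R) (x : pt) : Prop :=
  forall u, unit_vec u -> dot x u <= gamma u.

(* Dual Wulff shape  D W = W_{gamma_bar},  gamma_bar(u) = 1 / w(-u).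
   Since w(-u) is the unique r with radial W (-u) r, this is stated
   relationally (no choice needed). *)
Definition dual_wulff (W : pt -> Prop) (x : pt) : Prop :=
  forall u, unit_vec u -> forall r, radial W (opp u) r -> dot x u <= 1 / r.

Definition congruent (A B : pt -> Prop) : Prop :=
  exists f : pt -> pt,
    (forall x y, dist (f x) (f y) = dist x y) /\
    (forall y, B y <-> exists x, A x /\ f x = y).

From Pilot Require Import Defs.
From Stdlib Require Import Reals Lra Lia Psatz Classical.
Open Scope R_scope.

(* Write [v k] for the vertices of the polygon [P] and [w k] for those of its rotation
   [Q] by [PI / (2 m)].  A boundary point [p] of [P] imposes [y . (- p) <= 1] on the
   points [y] of the dual, so the dual is the polar body of the centrally symmetric [P]:
   the region [y . v k <= 1].  The normalisation [a^2 cos (PI / (2 m)) = 1] says that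
   [w k . v (S k) = w (S k) . v (S k) = 1] while [w j . v k <= 1] for all [j, k]; hence
   the polar is exactly [Q].  As [a^2 > 1], the vertex [v 0] of [P] violates
   [v 0 . v 0 <= 1], so the dual differs from [P], while the rotation maps [P] onto it. *)

Definition comb (v : nat -> pt) (n : nat) (lam : nat -> R) : pt :=
  (sum_f_R0 (fun k => lam k * fst (v k)) (n - 1),
   sum_f_R0 (fun k => lam k * snd (v k)) (n - 1)).

(* [regular_polygon m a th] unfolds to [hull (vertex m a th) (2 * m)]. *)
Definition hull (v : nat -> pt) (n : nat) (x : pt) : Prop :=
  exists lam : nat -> R,
    (forall k, (k < n)%nat -> 0 <= lam k) /\ sum_f_R0 lam (n - 1) = 1 /\ x = comb v n lam.

Definition indicator (j k : nat) : R := if Nat.eqb k j then 1 else 0.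

Lemma sum_indicator j N (f : nat -> R) : (j <= N)%nat ->
  sum_f_R0 (fun k => indicator j k * f k) N = f j.
Proof.
  induction N as [|N IH]; intros le_jN; unfold indicator in *; cbn [sum_f_R0].
  - apply Nat.le_0_r in le_jN. subst j. simpl. ring.
  - destruct (Nat.eqb_spec (S N) j) as [<-|ne].
    + rewrite sum_eq_R0; [ring|]. intros k le_kN.
      destruct (Nat.eqb_spec k (S N)); [lia | ring].
    + rewrite IH by lia. ring.
Qed.

Lemma sum_indicator3 i j l p q r N (f : nat -> R) :
  (i <= N)%nat -> (j <= N)%nat -> (l <= N)%nat ->
  sum_f_R0 (fun k => (p * indicator i k + q * indicator j k + r * indicator l k) * f k) N
  = p * f i + q * f j + r * f l.
Proof.
  intros Hi Hj Hl.
  rewrite (sum_eq _ (fun k => (indicator i k * (p * f k) + indicator j k * (q * f k))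
                              + indicator l k * (r * f k))) by (intros; ring).
  rewrite !sum_plus, !sum_indicator by assumption. reflexivity.
Qed.

Lemma dot_comb v n lam c :
  dot (comb v n lam) c = sum_f_R0 (fun k => lam k * dot (v k) c) (n - 1).
Proof.
  unfold comb, dot; cbn [fst snd]. rewrite (Rmult_comm _ (fst c)), (Rmult_comm _ (snd c)).
  rewrite !scal_sum, <- sum_plus. apply sum_eq. intros. ring.
Qed.

Lemma hull_halfplane v n c d x : (0 < n)%nat ->
  (forall k, (k < n)%nat -> dot (v k) c <= d) -> hull v n x -> dot x c <= d.
Proof.
  intros n_pos v_le [lam [lam_ge0 [lam_sum ->]]]. rewrite dot_comb.
  apply Rle_trans with (sum_f_R0 (fun k => lam k * d) (n - 1)).
  - apply sum_Rle. intros k le_k. apply Rmult_le_compat_l; apply lam_ge0 || apply v_le; lia.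
  - rewrite <- scal_sum, lam_sum. lra.
Qed.

Lemma hull_comb3 v n i j l p q r : (i < n)%nat -> (j < n)%nat -> (l < n)%nat ->
  0 <= p -> 0 <= q -> 0 <= r -> p + q + r = 1 ->
  hull v n (p * fst (v i) + q * fst (v j) + r * fst (v l),
            p * snd (v i) + q * snd (v j) + r * snd (v l)).
Proof.
  intros Hi Hj Hl Hp Hq Hr sum1.
  exists (fun k => p * indicator i k + q * indicator j k + r * indicator l k).
  split; [|split].
  - intros k _. unfold indicator.
    destruct (Nat.eqb k i), (Nat.eqb k j), (Nat.eqb k l); lra.
  - rewrite (sum_eq _ (fun k => (p * indicator i k + q * indicator j k + r * indicator l k) * 1))
      by (intros; ring).
    rewrite sum_indicator3 by lia. lra.
  - unfold comb. rewrite !sum_indicator3 by lia. reflexivity.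
Qed.

Lemma hull_vertex v n k : (k < n)%nat -> hull v n (v k).
Proof.
  intros Hk. destruct (v k) as [x1 x2] eqn:vk.
  replace (x1, x2) with (1 * fst (v k) + 0 * fst (v k) + 0 * fst (v k),
                         1 * snd (v k) + 0 * snd (v k) + 0 * snd (v k))
    by (rewrite vk; cbn [fst snd]; f_equal; ring).
  apply hull_comb3; auto; lra.
Qed.

Definition rot (b : R) (x : pt) : pt :=
  (cos b * fst x - sin b * snd x, sin b * fst x + cos b * snd x).

Lemma dist_rot b x y : Defs.dist (rot b x) (rot b y) = Defs.dist x y.
Proof.
  unfold Defs.dist, rot; cbn [fst snd]. f_equal. pose proof (sin2_cos2 b) as H.
  unfold Rsqr in H.
  replace ((cos b * fst x - sin b * snd x - (cos b * fst y - sin b * snd y)) ^ 2 +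
           (sin b * fst x + cos b * snd x - (sin b * fst y + cos b * snd y)) ^ 2)
    with ((sin b * sin b + cos b * cos b) * ((fst x - fst y) ^ 2 + (snd x - snd y) ^ 2))
    by ring.
  rewrite H. ring.
Qed.

Lemma rot_comb b v n lam : rot b (comb v n lam) = comb (fun k => rot b (v k)) n lam.
Proof.
  unfold rot, comb; cbn [fst snd].
  rewrite !scal_sum, <- minus_sum, <- sum_plus.
  f_equal; apply sum_eq; intros; ring.
Qed.

Lemma comb_ext v w n lam : (forall k, v k = w k) -> comb v n lam = comb w n lam.
Proof. intros vw. unfold comb. f_equal; apply sum_eq; intros k _; rewrite vw; reflexivity. Qed.

Lemma congruent_hull_rot v w n b :
  (forall k, w k = rot b (v k)) -> congruent (hull v n) (hull w n).
Proof.
  intros wv. exists (rot b). split; [exact (dist_rot b)|]. intros y. split.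
  - intros [lam [lam_ge0 [lam_sum ->]]]. exists (comb v n lam). split.
    + exists lam. auto.
    + rewrite rot_comb. apply comb_ext. intros k. symmetry. apply wv.
  - intros [x [[lam [lam_ge0 [lam_sum ->]]] <-]]. exists lam. split; [|split]; auto.
    rewrite rot_comb. apply comb_ext. intros k. symmetry. apply wv.
Qed.

Definition cross (x y : pt) : R := fst x * snd y - snd x * fst y.

Lemma cross_decomp p q y : cross p q <> 0 ->
  y = (cross y q / cross p q * fst p + cross p y / cross p q * fst q,
       cross y q / cross p q * snd p + cross p y / cross p q * snd q).
Proof.
  intros nz. destruct y as [y1 y2]. unfold cross in *; cbn [fst snd] in *.
  f_equal; field; exact nz.
Qed.

Lemma antiperiodic_sign_change (g : nat -> R) m :
  (forall k, g (k + m)%nat = - g k) -> exists k, 0 <= g k /\ g (S k) <= 0.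
Proof.
  intros anti. apply NNPP. intros no_change.
  assert (step : forall k, 0 <= g k -> 0 < g (S k)).
  { intros k gk. apply Rnot_le_lt. intros gSk. apply no_change. exists k. auto. }
  assert (stays_pos : forall s i, 0 < g s -> 0 < g (s + i)%nat).
  { intros s i gs. induction i as [|i IH]; [rewrite Nat.add_0_r; exact gs|].
    rewrite Nat.add_succ_r. apply step. lra. }
  destruct (Rle_lt_dec 0 (g 0%nat)) as [g0|g0].
  - pose proof (stays_pos 1%nat m (step 0%nat g0)) as H. rewrite anti in H.
    pose proof (step 0%nat g0). lra.
  - assert (gm : 0 < g m) by (pose proof (anti 0%nat) as H; simpl in H; lra).
    pose proof (stays_pos m m gm) as H. rewrite anti in H. lra.
Qed.

Lemma dist_lt_of_sq x y eps : 0 < eps ->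
  (fst x - fst y) ^ 2 + (snd x - snd y) ^ 2 < eps ^ 2 -> Defs.dist x y < eps.
Proof.
  intros eps_pos H. unfold Defs.dist. rewrite <- (sqrt_pow2 eps) by lra.
  apply sqrt_lt_1_alt. split; [|exact H].
  pose proof (pow2_ge_0 (fst x - fst y)). pose proof (pow2_ge_0 (snd x - snd y)). lra.
Qed.

Lemma sq_lt_of_dist_lt x y eps :
  Defs.dist x y < eps -> (fst x - fst y) ^ 2 + (snd x - snd y) ^ 2 < eps ^ 2.
Proof.
  unfold Defs.dist. set (s := (fst x - fst y) ^ 2 + (snd x - snd y) ^ 2). intros H.
  assert (s_ge0 : 0 <= s).
  { unfold s. pose proof (pow2_ge_0 (fst x - fst y)). pose proof (pow2_ge_0 (snd x - snd y)).
    lra. }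
  pose proof (sqrt_sqrt s s_ge0). pose proof (sqrt_pos s). nra.
Qed.

Lemma boundary_halfplane (W : pt -> Prop) p c d :
  (forall x, W x -> dot x c <= d) -> boundary W p -> dot p c <= d.
Proof.
  intros W_le p_bd. apply Rnot_lt_le. intros gap.
  set (delta := dot p c - d). set (cc := dot c c).
  assert (cc_ge0 : 0 <= cc) by (unfold cc, dot; nra).
  assert (eps_pos : 0 < delta / (1 + cc)) by (apply Rdiv_lt_0_compat; unfold delta; lra).
  destruct (p_bd _ eps_pos) as [[z [Wz close]] _].
  apply sq_lt_of_dist_lt in close. pose proof (W_le z Wz) as zc.
  set (e1 := fst p - fst z) in *. set (e2 := snd p - snd z) in *.
  assert (ec : e1 * fst c + e2 * snd c >= delta) by (unfold e1, e2, delta, dot in *; lra).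
  assert (cauchy_schwarz : (e1 * fst c + e2 * snd c) ^ 2 <= (e1 ^ 2 + e2 ^ 2) * cc)
    by (unfold cc, dot; pose proof (pow2_ge_0 (e1 * snd c - e2 * fst c)); nra).
  assert (small : (e1 ^ 2 + e2 ^ 2) * cc <= (delta / (1 + cc)) ^ 2 * cc) by nra.
  assert (tiny : (delta / (1 + cc)) ^ 2 * cc < delta ^ 2).
  { replace ((delta / (1 + cc)) ^ 2 * cc) with (delta ^ 2 * (cc / (1 + cc) ^ 2))
      by (field; lra).
    assert (cc / (1 + cc) ^ 2 < 1).
    { apply (Rmult_lt_reg_r ((1 + cc) ^ 2)); [nra|].
      unfold Rdiv. rewrite Rmult_assoc, Rinv_l by nra. nra. }
    assert (0 < delta) by (unfold delta; lra). nra. }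
  assert (delta ^ 2 <= (e1 * fst c + e2 * snd c) ^ 2).
  { assert (0 < delta) by (unfold delta; lra). simpl. nra. }
  lra.
Qed.

(* Pushing [p] outwards along its own direction leaves [W]. *)
Lemma boundary_of_support (W : pt -> Prop) p :
  W p -> 0 < dot p p -> (forall x, W x -> dot x p <= dot p p) -> boundary W p.
Proof.
  intros Wp pp_pos W_le eps eps_pos. split.
  - exists p. split; [exact Wp|]. apply dist_lt_of_sq; [exact eps_pos|]. nra.
  - set (t := eps / (2 * (1 + dot p p))).
    assert (t_pos : 0 < t) by (apply Rdiv_lt_0_compat; lra).
    exists (scale (1 + t) p). split.
    + intros W_out. pose proof (W_le _ W_out) as H. unfold dot, scale in H, pp_pos.
      simpl in H. nra.
    + apply dist_lt_of_sq; [exact eps_pos|]. unfold scale; cbn [fst snd].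
      replace ((fst p - (1 + t) * fst p) ^ 2 + (snd p - (1 + t) * snd p) ^ 2)
        with (t ^ 2 * dot p p) by (unfold dot; ring).
      assert (teps : t * (1 + dot p p) = eps / 2) by (unfold t; field; lra).
      assert (t ^ 2 * dot p p < (t * (1 + dot p p)) ^ 2).
      { replace ((t * (1 + dot p p)) ^ 2)
          with (t ^ 2 * dot p p + t ^ 2 * (1 + dot p p + dot p p ^ 2)) by ring.
        assert (0 < t ^ 2) by (apply pow_lt; lra).
        assert (0 < t ^ 2 * (1 + dot p p + dot p p ^ 2)) by (apply Rmult_lt_0_compat; nra).
        lra. }
      rewrite teps in *. replace ((eps / 2) ^ 2) with (eps ^ 2 / 4) in * by field.
      assert (0 < eps ^ 2) by (apply pow_lt; lra). lra.
Qed.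

(* Writing a boundary point as [p = r * (- u)] with [u] a unit vector, the
   constraint [dot y u <= 1 / r] of [dual_wulff] is [dot y (opp p) <= 1]. *)
Lemma dual_wulffI (W : pt -> Prop) y :
  (forall p, boundary W p -> dot y (opp p) <= 1) -> dual_wulff W y.
Proof.
  intros H u _ r [r_pos bd]. pose proof (H _ bd) as yu.
  replace (dot y (opp (scale r (opp u)))) with (r * dot y u) in yu
    by (unfold dot, opp, scale; simpl; ring).
  apply (Rmult_le_reg_l r); [exact r_pos|]. replace (r * (1 / r)) with 1 by (field; lra).
  exact yu.
Qed.

Lemma dual_wulff_dot_le (W : pt -> Prop) y p :
  dual_wulff W y -> 0 < dot p p -> boundary W (opp p) -> dot y p <= 1.
Proof.
  intros Dy pp_pos bd. set (s := sqrt (dot p p)).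
  assert (s_pos : 0 < s) by (apply sqrt_lt_R0; exact pp_pos).
  assert (ss : s * s = dot p p) by (apply sqrt_sqrt; lra).
  assert (unit : unit_vec (scale (/ s) p)).
  { unfold unit_vec, scale; cbn [fst snd]. unfold dot in ss.
    replace ((/ s * fst p) ^ 2 + (/ s * snd p) ^ 2)
      with ((fst p * fst p + snd p * snd p) / (s * s)) by (field; lra). rewrite <- ss. field. lra. }
  assert (rad : radial W (opp (scale (/ s) p)) s).
  { split; [exact s_pos|]. replace (scale s (opp (scale (/ s) p))) with (opp p); [exact bd|].
    unfold scale, opp; simpl. f_equal; field; lra. }
  pose proof (Dy _ unit s rad) as H.
  replace (dot y p) with (s * dot y (scale (/ s) p)) by (unfold dot, scale; simpl; field; lra).
  apply (Rmult_le_compat_l s) in H; [|lra]. replace (s * (1 / s)) with 1 in H by (field; lra).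
  exact H.
Qed.

Lemma INR_double n : INR (2 * n) = 2 * INR n.
Proof. rewrite mult_INR. simpl. ring. Qed.

Section Vertices.

Variables (m : nat) (a : R).
Hypothesis m_pos : (0 < m)%nat.

Lemma vertex_mod th k : vertex m a th k = vertex m a th (k mod (2 * m)).
Proof.
  assert (INR_m_pos : 0 < INR m) by (apply lt_0_INR; exact m_pos).
  unfold vertex. pose proof (Nat.div_mod_eq k (2 * m)) as div_k.
  set (q := (k / (2 * m))%nat) in *. set (r := (k mod (2 * m))%nat) in *.
  replace (th + INR k * (2 * PI / INR (2 * m)))
    with (th + INR r * (2 * PI / INR (2 * m)) + 2 * INR q * PI).
  - rewrite cos_period, sin_period. reflexivity.
  - rewrite div_k, plus_INR, !mult_INR. simpl INR. field. lra.
Qed.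

Lemma vertex_add_half th k : vertex m a th (k + m) = opp (vertex m a th k).
Proof.
  assert (INR_m_pos : 0 < INR m) by (apply lt_0_INR; exact m_pos).
  unfold vertex, opp. cbn [fst snd].
  replace (th + INR (k + m) * (2 * PI / INR (2 * m)))
    with (th + INR k * (2 * PI / INR (2 * m)) + PI)
    by (rewrite plus_INR, INR_double; field; lra).
  rewrite neg_cos, neg_sin. f_equal; ring.
Qed.

Lemma dot_vertex th th' i j :
  dot (vertex m a th i) (vertex m a th' j) =
  a ^ 2 * cos (th + INR i * (2 * PI / INR (2 * m)) - (th' + INR j * (2 * PI / INR (2 * m)))).
Proof. unfold dot, vertex; cbn [fst snd]. rewrite cos_minus. ring. Qed.

Lemma dot_vertex_self th k : dot (vertex m a th k) (vertex m a th k) = a ^ 2.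
Proof. rewrite dot_vertex, Rminus_diag, cos_0. ring. Qed.

Lemma cross_vertex_succ th k :
  cross (vertex m a th k) (vertex m a th (S k)) = a ^ 2 * sin (2 * PI / INR (2 * m)).
Proof.
  unfold cross, vertex; cbn [fst snd].
  replace (sin (2 * PI / INR (2 * m)))
    with (sin (th + INR (S k) * (2 * PI / INR (2 * m)) - (th + INR k * (2 * PI / INR (2 * m)))))
    by (f_equal; rewrite S_INR; ring).
  rewrite sin_minus. ring.
Qed.

Lemma rot_vertex b th k : rot b (vertex m a th k) = vertex m a (th + b) k.
Proof.
  unfold rot, vertex; cbn [fst snd]. set (x := th + INR k * (2 * PI / INR (2 * m))).
  replace (th + b + INR k * (2 * PI / INR (2 * m))) with (x + b) by (unfold x; ring).
  rewrite (cos_plus x b), (sin_plus x b). f_equal; ring.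
Qed.

Lemma polygon_halfplane th c d x :
  (forall k, dot (vertex m a th k) c <= d) -> regular_polygon m a th x -> dot x c <= d.
Proof. intros v_le. apply hull_halfplane; [lia | intros k _; apply v_le]. Qed.

Lemma polygon_comb3 th i j l p q r :
  0 <= p -> 0 <= q -> 0 <= r -> p + q + r = 1 ->
  regular_polygon m a th
    (p * fst (vertex m a th i) + q * fst (vertex m a th j) + r * fst (vertex m a th l),
     p * snd (vertex m a th i) + q * snd (vertex m a th j) + r * snd (vertex m a th l)).
Proof.
  intros. rewrite (vertex_mod th i), (vertex_mod th j), (vertex_mod th l).
  apply hull_comb3; try apply Nat.mod_upper_bound; auto; lia.
Qed.

Lemma polygon_vertex th k : regular_polygon m a th (vertex m a th k).
Proof. rewrite vertex_mod. apply hull_vertex, Nat.mod_upper_bound. lia. Qed.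

(* The centre is the midpoint of [vertex k] and [vertex (k + m)]. *)
Lemma polygon_sector th k s t : 0 <= s -> 0 <= t -> s + t <= 1 ->
  regular_polygon m a th (s * fst (vertex m a th k) + t * fst (vertex m a th (S k)),
                          s * snd (vertex m a th k) + t * snd (vertex m a th (S k))).
Proof.
  intros s_ge0 t_ge0 st_le1. set (c := (1 - s - t) / 2).
  pose proof (polygon_comb3 th k (S k) (k + m) (s + c) t c) as H.
  rewrite vertex_add_half in H. unfold opp in H; cbn [fst snd] in H.
  replace (s * fst (vertex m a th k) + t * fst (vertex m a th (S k)))
    with ((s + c) * fst (vertex m a th k) + t * fst (vertex m a th (S k))
          + c * - fst (vertex m a th k)) by ring.
  replace (s * snd (vertex m a th k) + t * snd (vertex m a th (S k)))
    with ((s + c) * snd (vertex m a th k) + t * snd (vertex m a th (S k))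
          + c * - snd (vertex m a th k)) by ring.
  apply H; unfold c; lra.
Qed.

Hypothesis a_pos : 0 < a.

Lemma vertex_boundary th k : boundary (regular_polygon m a th) (vertex m a th k).
Proof.
  apply boundary_of_support.
  - apply polygon_vertex.
  - rewrite dot_vertex_self. apply pow_lt. exact a_pos.
  - intros x. apply polygon_halfplane. intros i.
    rewrite dot_vertex_self.
    pose proof (dot_vertex_self th i) as Hi. pose proof (dot_vertex_self th k) as Hk.
    unfold dot in *. set (u := vertex m a th i) in *. set (v := vertex m a th k) in *.
    pose proof (pow2_ge_0 (fst u - fst v)). pose proof (pow2_ge_0 (snd u - snd v)). nra.
Qed.

Lemma dual_dot_vertex_le th y k :
  dual_wulff (regular_polygon m a th) y -> dot y (vertex m a th k) <= 1.
Proof.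
  intros Dy. apply (dual_wulff_dot_le _ _ _ Dy).
  - rewrite dot_vertex_self. apply pow_lt. exact a_pos.
  - rewrite <- vertex_add_half. apply vertex_boundary.
Qed.

End Vertices.

Lemma cos_le_away_from_0 b x : 0 <= b <= PI -> b <= x <= 2 * PI - b -> cos x <= cos b.
Proof.
  intros b_bd x_bd. pose proof PI_RGT_0.
  destruct (Rle_lt_dec x PI) as [x_le | x_gt].
  - apply cos_decr_1; lra.
  - replace (cos b) with (cos (2 * PI - b)) by (rewrite cos_minus, cos_2PI, sin_2PI; ring).
    apply cos_incr_1; lra.
Qed.

Section Duality.

Variables (m : nat) (a th0 : R).
Hypothesis m_ge2 : (2 <= m)%nat.
Hypothesis a_pos : 0 < a.
Hypothesis a_cos : a ^ 2 * cos (PI / INR (2 * m)) = 1.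

Let m_pos : (0 < m)%nat := ltac:(lia).

Local Notation beta := (PI / INR (2 * m)).

Let INR_m_ge2 : 2 <= INR m :=
  ltac:(replace 2 with (INR 2) by (simpl; ring); apply le_INR; exact m_ge2).

Lemma half_angle_bounds : 0 < beta /\ 4 * beta <= PI.
Proof.
  pose proof INR_m_ge2. pose proof PI_RGT_0. rewrite INR_double. split.
  - apply Rdiv_lt_0_compat; lra.
  - apply (Rmult_le_reg_r (2 * INR m)); [lra|].
    unfold Rdiv. rewrite Rmult_assoc, (Rmult_assoc PI), Rinv_l by lra. nra.
Qed.

(* Odd multiples of [beta] stay at angular distance at least [beta] from [2 PI Z]. *)
Lemma cos_odd_multiple_le K : cos ((2 * INR K - 1) * beta) <= cos beta.
Proof.
  pose proof INR_m_ge2. destruct half_angle_bounds as [beta_pos beta_le].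
  assert (beta_PI : PI = 2 * INR m * beta) by (rewrite INR_double; field; lra).
  pose proof (Nat.div_mod_eq K (2 * m)) as div_K.
  set (q := (K / (2 * m))%nat) in *. set (r := (K mod (2 * m))%nat) in *.
  assert (r_lt : (r < 2 * m)%nat) by (apply Nat.mod_upper_bound; lia).
  replace ((2 * INR K - 1) * beta) with ((2 * INR r - 1) * beta + 2 * INR q * PI)
    by (rewrite div_K, plus_INR, !mult_INR; simpl INR; field; lra).
  rewrite cos_period. destruct (Nat.eq_dec r 0) as [r0|r_pos].
  - rewrite r0, INR_0. replace ((2 * 0 - 1) * beta) with (- beta) by ring.
    rewrite cos_neg. lra.
  - assert (1 <= INR r) by (replace 1 with (INR 1) by reflexivity; apply le_INR; lia).
    assert (INR r + 1 <= 2 * INR m) by (rewrite <- INR_double, <- S_INR; apply le_INR; lia).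
    set (c := beta) in *.
    assert (lower : c <= (2 * INR r - 1) * c).
    { assert (0 <= (2 * INR r - 2) * c) by (apply Rmult_le_pos; lra). lra. }
    assert (upper : (2 * INR r - 1) * c <= 2 * PI - c).
    { rewrite beta_PI. assert (0 <= (4 * INR m - 2 * INR r) * c) by (apply Rmult_le_pos; lra).
      lra. }
    apply cos_le_away_from_0; lra.
Qed.

Lemma dot_vertex_rotated_le i j :
  dot (vertex m a th0 i) (vertex m a (th0 + beta) j) <= 1.
Proof.
  pose proof INR_m_ge2. rewrite dot_vertex, <- a_cos.
  set (x := th0 + INR i * (2 * PI / INR (2 * m)) - (th0 + beta + INR j * (2 * PI / INR (2 * m)))).
  rewrite <- (cos_period x j).
  replace (x + 2 * INR j * PI) with ((2 * INR (i + (2 * m - 1) * j) - 1) * beta)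
    by (unfold x; rewrite plus_INR, mult_INR, minus_INR, !INR_double by lia;
        simpl INR; field; lra).
  apply Rmult_le_compat_l; [apply pow2_ge_0 | apply cos_odd_multiple_le].
Qed.

(* [vertex th0 (S k)] lies on the edge line of the rotated polygon through its
   vertices [k] and [S k]. *)
Lemma rotated_edge_dot k :
  dot (vertex m a (th0 + beta) k) (vertex m a th0 (S k)) = 1 /\
  dot (vertex m a (th0 + beta) (S k)) (vertex m a th0 (S k)) = 1.
Proof.
  pose proof INR_m_ge2. rewrite !dot_vertex, <- a_cos. split.
  - rewrite <- cos_neg. f_equal. f_equal. rewrite S_INR, INR_double. field. lra.
  - f_equal. f_equal. ring.
Qed.

Lemma rotated_in_dual y :
  regular_polygon m a (th0 + beta) y -> dual_wulff (regular_polygon m a th0) y.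
Proof.
  intros Qy. apply dual_wulffI. intros p p_bd.
  apply (polygon_halfplane m a m_pos (th0 + beta)); [|exact Qy]. intros k.
  replace (dot (vertex m a (th0 + beta) k) (opp p)) with (dot p (vertex m a (th0 + beta) (k + m)))
    by (rewrite vertex_add_half by exact m_pos; unfold dot, opp; cbn [fst snd]; ring).
  apply (boundary_halfplane _ _ _ _ (fun x => polygon_halfplane m a m_pos th0 _ _ x
                                              (fun i => dot_vertex_rotated_le i _))).
  exact p_bd.
Qed.

Lemma dual_in_rotated y :
  dual_wulff (regular_polygon m a th0) y -> regular_polygon m a (th0 + beta) y.
Proof.
  intros Dy. pose proof INR_m_ge2. destruct half_angle_bounds as [beta_pos beta_le].
  set (w := vertex m a (th0 + beta)).
  destruct (antiperiodic_sign_change (fun k => cross (w k) y) m) as [k [gk gSk]].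
  { intros k. unfold w. rewrite vertex_add_half by exact m_pos.
    unfold cross, opp; cbn [fst snd]. ring. }
  set (D := cross (w k) (w (S k))).
  assert (D_pos : 0 < D).
  { unfold D, w. rewrite cross_vertex_succ. apply Rmult_lt_0_compat; [apply pow_lt; lra|].
    apply sin_gt_0; rewrite INR_double in *; unfold Rdiv in *; nra. }
  set (s := cross y (w (S k)) / D). set (t := cross (w k) y / D).
  assert (s_ge0 : 0 <= s).
  { unfold s. apply Rle_mult_inv_pos; [|exact D_pos]. unfold cross in *; lra. }
  assert (t_ge0 : 0 <= t) by (apply Rle_mult_inv_pos; [exact gk | exact D_pos]).
  assert (y_eq := cross_decomp (w k) (w (S k)) y (Rgt_not_eq _ _ D_pos)).
  fold D s t in y_eq.
  assert (st_le1 : s + t <= 1).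
  { pose proof (dual_dot_vertex_le m a m_pos a_pos th0 y (S k) Dy) as y_dot.
    destruct (rotated_edge_dot k) as [E1 E2]. fold w in E1, E2.
    replace (dot y (vertex m a th0 (S k)))
      with (s * dot (w k) (vertex m a th0 (S k)) + t * dot (w (S k)) (vertex m a th0 (S k)))
      in y_dot by (rewrite y_eq; unfold dot; cbn [fst snd]; ring).
    rewrite E1, E2 in y_dot. lra. }
  rewrite y_eq. exact (polygon_sector m a m_pos (th0 + beta) k s t s_ge0 t_ge0 st_le1).
Qed.

Lemma vertex_not_dual : ~ dual_wulff (regular_polygon m a th0) (vertex m a th0 0).
Proof.
  intros D0. pose proof (dual_dot_vertex_le m a m_pos a_pos th0 _ 0 D0) as H.
  rewrite dot_vertex_self in H. destruct half_angle_bounds as [beta_pos beta_le].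
  pose proof PI_RGT_0.
  assert (cos_beta_lt1 : cos beta < 1) by (rewrite <- cos_0; apply cos_decreasing_1; lra).
  assert (0 < a ^ 2) by (apply pow_lt; lra). nra.
Qed.

End Duality.

Theorem mainTheorem6 (m : nat) (a th0 : R) :
  (2 <= m)%nat -> 0 < a ->
  sin ((PI - 2 * PI / INR (2 * m)) / 2) = 1 / a ^ 2 ->
  ~ (forall x, dual_wulff (regular_polygon m a th0) x <-> regular_polygon m a th0 x) /\
  congruent (regular_polygon m a th0) (dual_wulff (regular_polygon m a th0)).
Proof.
  intros m_ge2 a_pos sin_hyp.
  assert (a_cos : a ^ 2 * cos (PI / INR (2 * m)) = 1).
  { assert (0 < INR m) by (apply lt_0_INR; lia). assert (0 < a ^ 2) by (apply pow_lt; lra).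
    rewrite <- sin_shift.
    replace (PI / 2 - PI / INR (2 * m)) with ((PI - 2 * PI / INR (2 * m)) / 2)
      by (rewrite INR_double; field; lra).
    rewrite sin_hyp. field. lra. }
  assert (dual_eq : forall y, dual_wulff (regular_polygon m a th0) y <->
                              regular_polygon m a (th0 + PI / INR (2 * m)) y).
  { split; [apply dual_in_rotated | apply rotated_in_dual]; assumption. }
  split.
  - intros same. apply (vertex_not_dual m a th0 m_ge2 a_pos a_cos).
    apply same, polygon_vertex. lia.
  - destruct (congruent_hull_rot (vertex m a th0) (vertex m a (th0 + PI / INR (2 * m)))
                (2 * m) (PI / INR (2 * m)) (fun k => eq_sym (rot_vertex m a _ th0 k)))
      as [f [f_iso f_img]].
    exists f. split; [exact f_iso|]. intros y. rewrite dual_eq. apply f_img.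
Qed.
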